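(* Let $k\in\mathbb{N}$, $n>2k$, $q>k$ and $\lambda_0>0$. Assume there exists a classical solution $w$ of \[ c_{n,k}r^{1-n}\big(r^{n-k}(w')^k\big)'=\lambda_0(1-w)^q\ (0<r<1),\quad w<0\ (0<r<1),\quad w'(0)=0,\ w(1)=0. \] Then for every $\lambda\in(0,\lambda_0)$ problem $(P_\lambda)$ has a maximal bounded solution $u_\lambda$. Moreover, the maximal solutions are decreasing in $\lambda$: if $0<\lambda_1<\lambda_2<\lambda_0$, then $u_{\lambda_2}\le u_{\lambda_1}$.
   Context: $c_{n,k}=\binom{n}{k}/n$. Problem $(P_\lambda)$ ($\lambda>0$) is $c_{n,k}r^{1-n}(r^{n-k}(u')^k)'=\lambda(1-u)^q$ on $(0,1)$, $u<0$ on $(0,1)$, $u'(0)=0$, $u(1)=0$. A classical solution is a function in $\Phi_0^k=\{u\in C^2((0,1))\cap C^1([0,1]): (r^{n-i}(u')^i)'\ge0 \text{ on }(0,1),\ i=1,\dots,k,\ u'(0)=u(1)=0\}$ satisfying the equation. A subsolution is $u\in C^2((0,1))\cap C^1([0,1])$ with $(r^{n-i}(u')^i)'\ge0$ for $i=1,\dots,k$, $c_{n,k}r^{1-n}(r^{n-k}(u')^k)'\ge\lambda(1-u)^q$ and $u(1)\le0$. A maximal solution is a solution $v$ with $u\le v$ for every subsolution $u$. *)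

From Stdlib Require Import Reals Lra.
Open Scope R_scope.

Definition Ioo (r : R) : Prop := 0 < r < 1.
Definition Icc (r : R) : Prop := 0 <= r <= 1.

Definition deriv_within (D : R -> Prop) (f : R -> R) (x l : R) : Prop :=
  forall eps, 0 < eps -> exists delta, 0 < delta /\
    forall y, D y -> y <> x -> Rabs (y - x) < delta ->
      Rabs ((f y - f x) / (y - x) - l) < eps.

Definition cont_within (D : R -> Prop) (f : R -> R) (x : R) : Prop :=
  forall eps, 0 < eps -> exists delta, 0 < delta /\
    forall y, D y -> Rabs (y - x) < delta -> Rabs (f y - f x) < eps.

(* u ∈ C^2((0,1)) ∩ C^1([0,1]) with u1 its derivative on [0,1]. *)
Definition C2_C1 (u u1 : R -> R) : Prop :=
  (forall r, Icc r -> deriv_within Icc u r (u1 r) /\ cont_within Icc u1 r) /\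
  exists u2 : R -> R, forall r, Ioo r ->
    derivable_pt_lim u1 r (u2 r) /\ continuity_pt u2 r.

Definition admissible (n k : nat) (u1 : R -> R) : Prop :=
  forall i : nat, (1 <= i <= k)%nat -> forall r, Ioo r ->
    exists d, derivable_pt_lim (fun s => s ^ (n - i) * (u1 s) ^ i) r d /\ 0 <= d.

Definition cnk (n k : nat) : R := C n k / INR n.

Definition is_solution (n k : nat) (q lam : R) (u : R -> R) : Prop :=
  exists u1 : R -> R,
    C2_C1 u u1 /\ admissible n k u1 /\ u1 0 = 0 /\ u 1 = 0 /\
    (forall r, Ioo r -> u r < 0) /\
    (forall r, Ioo r -> exists d,
       derivable_pt_lim (fun s => s ^ (n - k) * (u1 s) ^ k) r d /\
       cnk n k * d / r ^ (n - 1) = lam * Rpower (1 - u r) q).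

Definition is_subsolution (n k : nat) (q lam : R) (u : R -> R) : Prop :=
  exists u1 : R -> R,
    C2_C1 u u1 /\ admissible n k u1 /\ u 1 <= 0 /\
    (forall r, Ioo r -> exists d,
       derivable_pt_lim (fun s => s ^ (n - k) * (u1 s) ^ k) r d /\
       cnk n k * d / r ^ (n - 1) >= lam * Rpower (1 - u r) q).

Definition is_maximal (n k : nat) (q lam : R) (u : R -> R) : Prop :=
  is_solution n k q lam u /\
  forall v, is_subsolution n k q lam v -> forall r, Icc r -> v r <= u r.

Definition bounded01 (u : R -> R) : Prop :=
  exists M, forall r, Icc r -> Rabs (u r) <= M.

(* With c = λ / c_{n,k}, radial solutions of (P_λ) are the fixed points of the integral
   operator, nondecreasing in u and nonincreasing in c,
     T c u (r) = - ∫_r^1 ( c s^{k-n} ∫_0^s t^{n-1} (1 - u(t))^q dt )^{1/k} ds,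
   and every subsolution v satisfies v <= T c v. The solution w for λ_0 > λ therefore
   satisfies w <= T c w, and the family of continuous u <= 0 with w <= u <= T c u is
   T-invariant. For u in the family 0 <= (T c u)' <= (T c w)', so the T c u are
   uniformly Lipschitz; hence the pointwise supremum U of the family is Lipschitz,
   belongs to the family, and is a fixed point.
   For a subsolution v, max(v, U) is again in the family, so v <= U. Monotonicity in λ
   holds because the maximal solution for λ_2 is a subsolution for λ_1 < λ_2. *)

From Stdlib Require Import Reals Lra Lia ClassicalEpsilon.
From Coquelicot Require Import Coquelicot.
Open Scope R_scope.

Lemma continuity_pt_eps (f : R -> R) (x : R) :
  continuity_pt f x <->
  forall eps, 0 < eps -> exists d, 0 < d /\
    forall y, Rabs (y - x) < d -> Rabs (f y - f x) < eps.
Proof.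
  unfold continuity_pt, continue_in, limit1_in, limit_in; simpl; unfold R_dist.
  split; intros H eps He; destruct (H eps He) as [d [Hd Hy]]; exists d; split; auto.
  - intros y Hyx. destruct (Req_dec y x) as [->|Hne].
    + rewrite Rminus_eq_0, Rabs_R0; auto.
    + apply Hy. repeat split; auto.
  - intros y [_ Hy']. auto.
Qed.

Lemma derivable_pt_lim_continuity_pt f x l : derivable_pt_lim f x l -> continuity_pt f x.
Proof. intros H. apply derivable_continuous_pt. exists l. exact H. Qed.

Lemma derivable_pt_lim_local f g x l d : 0 < d ->
  (forall y, Rabs (y - x) < d -> g y = f y) ->
  derivable_pt_lim f x l -> derivable_pt_lim g x l.
Proof.
  intros Hd Heq H eps He. destruct (H eps He) as [d' Hd'].
  assert (Hp : 0 < Rmin d d') by (apply Rmin_pos; auto; apply cond_pos).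
  exists (mkposreal _ Hp). simpl. intros h Hh0 Hh.
  rewrite (Heq (x + h)), (Heq x).
  - apply Hd'; auto. eapply Rlt_le_trans; [exact Hh|apply Rmin_r].
  - rewrite Rminus_eq_0, Rabs_R0; auto.
  - replace (x + h - x) with h by ring. eapply Rlt_le_trans; [exact Hh|apply Rmin_l].
Qed.

Lemma continuity_pt_local f g x d : 0 < d ->
  (forall y, Rabs (y - x) < d -> g y = f y) ->
  continuity_pt f x -> continuity_pt g x.
Proof.
  intros Hd Heq H. apply continuity_pt_eps. intros eps He.
  destruct (proj1 (continuity_pt_eps f x) H eps He) as [d' [Hd' Hy]].
  exists (Rmin d d'). split; [apply Rmin_pos; auto|].
  intros y Hyx. rewrite (Heq y), (Heq x).
  - apply Hy. eapply Rlt_le_trans; [exact Hyx|apply Rmin_r].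
  - rewrite Rminus_eq_0, Rabs_R0; auto.
  - eapply Rlt_le_trans; [exact Hyx|apply Rmin_l].
Qed.

Lemma continuity_pt_Rmax f g x : continuity_pt f x -> continuity_pt g x ->
  continuity_pt (fun t => Rmax (f t) (g t)) x.
Proof.
  intros Hf Hg. apply continuity_pt_eps. intros eps He.
  destruct (proj1 (continuity_pt_eps f x) Hf eps He) as [d1 [Hd1 H1]].
  destruct (proj1 (continuity_pt_eps g x) Hg eps He) as [d2 [Hd2 H2]].
  exists (Rmin d1 d2). split; [apply Rmin_pos; auto|].
  intros y Hy.
  assert (Hmax : forall a b c d, Rabs (Rmax a b - Rmax c d) <= Rmax (Rabs (a - c)) (Rabs (b - d)))
    by (intros; unfold Rmax, Rabs; repeat (destruct Rcase_abs || destruct Rle_dec); lra).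
  eapply Rle_lt_trans; [apply Hmax|]. apply Rmax_lub_lt.
  - apply H1. eapply Rlt_le_trans; [exact Hy|apply Rmin_l].
  - apply H2. eapply Rlt_le_trans; [exact Hy|apply Rmin_r].
Qed.

Lemma cont_within_of_deriv_within D f x l : deriv_within D f x l -> cont_within D f x.
Proof.
  intros H eps He. destruct (H 1 Rlt_0_1) as [d [Hd Hy]].
  assert (Hl : 0 < Rabs l + 1) by (pose proof (Rabs_pos l); lra).
  exists (Rmin d (eps / (Rabs l + 1))). split.
  { apply Rmin_pos; auto. apply Rdiv_lt_0_compat; auto. }
  intros y Dy Hyx. destruct (Req_dec y x) as [->|Hne].
  { rewrite Rminus_eq_0, Rabs_R0; auto. }
  assert (Hyx2 : Rabs (y - x) * (Rabs l + 1) < eps).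
  { apply Rlt_le_trans with (eps / (Rabs l + 1) * (Rabs l + 1)); [|right; field; lra].
    apply Rmult_lt_compat_r; auto. eapply Rlt_le_trans; [exact Hyx| apply Rmin_r]. }
  specialize (Hy y Dy Hne ltac:(eapply Rlt_le_trans; [exact Hyx| apply Rmin_l])).
  assert (Hq : Rabs ((f y - f x) / (y - x)) <= Rabs l + 1).
  { replace ((f y - f x) / (y - x)) with (((f y - f x) / (y - x) - l) + l) by ring.
    eapply Rle_trans; [apply Rabs_triang|]. lra. }
  replace (f y - f x) with ((f y - f x) / (y - x) * (y - x)) by (field; lra).
  rewrite Rabs_mult. pose proof (Rabs_pos (y - x)). nra.
Qed.

Lemma deriv_within_of_derivable_pt_lim D f x l :
  derivable_pt_lim f x l -> deriv_within D f x l.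
Proof.
  intros H eps He. destruct (H eps He) as [d Hd]. exists d. split; [apply cond_pos|].
  intros y _ Hyx Hy. specialize (Hd (y - x)). replace (x + (y - x)) with y in Hd by ring.
  apply Hd; auto. lra.
Qed.

Lemma cont_within_of_continuity_pt D f x : continuity_pt f x -> cont_within D f x.
Proof.
  intros H eps He. destruct (proj1 (continuity_pt_eps f x) H eps He) as [d [Hd Hy]].
  exists d. split; auto.
Qed.

Lemma Ioo_ball x y : Ioo x -> Rabs (y - x) < Rmin x (1 - x) -> Ioo y.
Proof.
  unfold Ioo. intros Hx Hy.
  assert (Rabs (y - x) < x) by (eapply Rlt_le_trans; [exact Hy|apply Rmin_l]).
  assert (Rabs (y - x) < 1 - x) by (eapply Rlt_le_trans; [exact Hy|apply Rmin_r]).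
  revert H H0. unfold Rabs. destruct Rcase_abs; lra.
Qed.

Lemma Ioo_radius_pos x : Ioo x -> 0 < Rmin x (1 - x).
Proof. unfold Ioo. intros. apply Rmin_pos; lra. Qed.

Lemma Rabs_lt_self_pos x y : 0 < x -> Rabs (y - x) < x -> 0 < y.
Proof. intros Hx. unfold Rabs. destruct Rcase_abs; lra. Qed.

Lemma derivable_pt_lim_of_deriv_within f x l :
  Ioo x -> deriv_within Icc f x l -> derivable_pt_lim f x l.
Proof.
  intros Hx H eps He. destruct (H eps He) as [d [Hd Hy]].
  assert (Hp : 0 < Rmin d (Rmin x (1 - x))) by (apply Rmin_pos; auto; apply Ioo_radius_pos, Hx).
  exists (mkposreal _ Hp). simpl. intros h Hh0 Hh.
  assert (HI : Ioo (x + h)).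
  { apply (Ioo_ball x); auto. replace (x + h - x) with h by ring.
    eapply Rlt_le_trans; [exact Hh|apply Rmin_r]. }
  specialize (Hy (x + h)). replace (x + h - x) with h in Hy by ring.
  apply Hy; auto.
  - unfold Ioo, Icc in *; lra.
  - lra.
  - eapply Rlt_le_trans; [exact Hh|apply Rmin_l].
Qed.

(* Functions below are only meaningful on [0,1]; composing with [clamp] extends them
   to R, so that continuity on [0,1] can be expressed by [continuity_pt]. *)
Definition clamp (x : R) : R := Rmax 0 (Rmin 1 x).

Lemma clamp_id x : Icc x -> clamp x = x.
Proof.
  unfold Icc, clamp; intros [H1 H2].
  rewrite Rmin_right, Rmax_right by lra. reflexivity.
Qed.

Lemma clamp_Icc x : Icc (clamp x).
Proof.
  unfold Icc, clamp. split; [apply Rmax_l|].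
  apply Rmax_lub; [lra|apply Rmin_l].
Qed.

Lemma clamp_lipschitz x y : Rabs (clamp x - clamp y) <= Rabs (x - y).
Proof.
  unfold clamp, Rmax, Rmin.
  repeat destruct Rle_dec; unfold Rabs; repeat destruct Rcase_abs; lra.
Qed.

Lemma continuity_pt_clamp_comp f x :
  continuity_pt f (clamp x) -> continuity_pt (fun t => f (clamp t)) x.
Proof.
  intros H. apply (continuity_pt_comp clamp f); auto.
  apply continuity_pt_eps. intros eps He. exists eps. split; auto.
  intros y Hy. eapply Rle_lt_trans; [apply clamp_lipschitz|auto].
Qed.

Lemma continuity_pt_clamp_of_cont_within f :
  (forall x, Icc x -> cont_within Icc f x) ->
  forall x, continuity_pt (fun t => f (clamp t)) x.
Proof.
  intros H x. apply continuity_pt_eps. intros eps He.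
  destruct (H (clamp x) (clamp_Icc x) eps He) as [d [Hd Hy]].
  exists d. split; auto. intros y Hyx. apply Hy; [apply clamp_Icc|].
  eapply Rle_lt_trans; [apply clamp_lipschitz|auto].
Qed.

Lemma derivable_pt_lim_clamp_comp f x l :
  Ioo x -> derivable_pt_lim f x l -> derivable_pt_lim (fun t => f (clamp t)) x l.
Proof.
  intros Hx H. apply derivable_pt_lim_local with f (Rmin x (1 - x)); auto.
  - apply Ioo_radius_pos, Hx.
  - intros y Hy. f_equal. apply clamp_id. pose proof (Ioo_ball x y Hx Hy).
    unfold Ioo, Icc in *; lra.
Qed.

Lemma continuity_pt_clamp_pow m x : continuity_pt (fun t => clamp t ^ m) x.
Proof.
  apply (continuity_pt_clamp_comp (fun z => z ^ m)).
  apply derivable_continuous_pt, derivable_pt_pow.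
Qed.

Lemma nondecreasing_of_deriv_nonneg f a b : 0 <= a -> a < b -> b <= 1 ->
  (forall x, a < x < b -> exists d, derivable_pt_lim f x d /\ 0 <= d) ->
  continuity_pt (fun t => f (clamp t)) a -> continuity_pt (fun t => f (clamp t)) b ->
  f a <= f b.
Proof.
  intros Ha Hab Hb Hd Ca Cb.
  set (g := fun t => f (clamp t)).
  assert (Hex : forall x, exists d, (a < x < b -> derivable_pt_lim g x d) /\ 0 <= d).
  { intros x. destruct (classic (a < x < b)) as [Hx|Hx].
    - destruct (Hd x Hx) as [d [H1 H2]]. exists d. split; auto. intros _.
      apply derivable_pt_lim_clamp_comp; auto. unfold Ioo; lra.
    - exists 0. split; [tauto|lra]. }
  destruct (choice _ Hex) as [df Hdf].
  destruct (MVT_gen g a b df) as [c [_ Heq]].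
  - intros x Hx. rewrite Rmin_left, Rmax_right in Hx by lra.
    apply is_derive_Reals, Hdf, Hx.
  - intros x Hx. rewrite Rmin_left, Rmax_right in Hx by lra.
    destruct (Req_dec x a) as [->|]; auto. destruct (Req_dec x b) as [->|]; auto.
    apply derivable_pt_lim_continuity_pt with (df x). apply Hdf. lra.
  - unfold g in Heq. rewrite !clamp_id in Heq by (unfold Icc; lra).
    pose proof (proj2 (Hdf c)). nra.
Qed.

Lemma Rpower_pos x y : 0 < Rpower x y.
Proof. apply exp_pos. Qed.

Lemma continuity_pt_Rpower_base x y : 0 < x -> continuity_pt (fun z => Rpower z y) x.
Proof. intros Hx. eapply derivable_pt_lim_continuity_pt, derivable_pt_lim_power, Hx. Qed.

Lemma continuous_of_continuity_pt f x : continuity_pt f x -> continuous f x.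
Proof. apply continuity_pt_filterlim. Qed.

Lemma Rpower_inv_INR_pow x m : (1 <= m)%nat -> 0 < x -> Rpower x (/ INR m) ^ m = x.
Proof.
  intros Hm Hx. rewrite <- Rpower_pow by apply Rpower_pos.
  rewrite Rpower_mult, Rinv_l; [apply Rpower_1; auto|]. apply not_0_INR. lia.
Qed.

Lemma Rpower_pow_inv_INR x m : (1 <= m)%nat -> 0 < x -> Rpower (x ^ m) (/ INR m) = x.
Proof.
  intros Hm Hx. rewrite <- Rpower_pow by auto.
  rewrite Rpower_mult, Rinv_r; [apply Rpower_1; auto|]. apply not_0_INR. lia.
Qed.

Lemma pow_le_reg_l x y m : (1 <= m)%nat -> 0 <= x -> 0 <= y -> y ^ m <= x ^ m -> y <= x.
Proof.
  intros Hm Hx Hy H. destruct (Rle_lt_dec y x) as [|Hxy]; auto. exfalso.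
  destruct m as [|m]; [lia|]. simpl in H.
  pose proof (pow_incr x y m ltac:(lra)). pose proof (pow_lt y m ltac:(lra)). nra.
Qed.

Lemma Rpower_inv_INR_lt x eps m : (1 <= m)%nat -> 0 < eps -> 0 < x < eps ^ m ->
  Rpower x (/ INR m) < eps.
Proof.
  intros Hm He Hx. rewrite <- (Rpower_pow_inv_INR eps m Hm He).
  apply Rlt_Rpower_l; auto. apply Rinv_0_lt_compat, lt_0_INR. lia.
Qed.

Lemma cnk_pos n k : (0 < n)%nat -> 0 < cnk n k.
Proof.
  intros Hn. unfold cnk, Binomial.C. apply Rdiv_lt_0_compat; [|apply lt_0_INR; lia].
  apply Rdiv_lt_0_compat; [apply INR_fact_lt_0|].
  apply Rmult_lt_0_compat; apply INR_fact_lt_0.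
Qed.

Lemma is_subsolution_of_solution n k q l1 l2 u : 0 < l1 <= l2 ->
  is_solution n k q l2 u -> is_subsolution n k q l1 u.
Proof.
  intros Hl [u1 [H1 [H2 [_ [H4 [_ H6]]]]]]. exists u1. split; [exact H1|split; [exact H2|split; [lra|]]].
  intros r Hr. destruct (H6 r Hr) as [d [Hd Heq]]. exists d. split; auto. rewrite Heq.
  apply Rle_ge, Rmult_le_compat_r; [left; apply Rpower_pos|lra].
Qed.

Section IntegralOperator.
Variables (n k : nat) (q : R).
Hypothesis hk : (1 <= k)%nat.
Hypothesis hkn : (k < n)%nat.
Hypothesis hq : 0 <= q.

Definition nonpos_cont (u : R -> R) : Prop :=
  (forall x, continuity_pt (fun t => u (clamp t)) x) /\ (forall x, Icc x -> u x <= 0).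

(* With c = λ / c_{n,k}, integrating the equation of (P_λ) from 0 (where u' = 0) gives
   r^{n-k} u'(r)^k = G c u r, i.e. u' = phi c u, and u = T c u follows from u(1) = 0. *)
Definition F (u : R -> R) (t : R) : R := t ^ (n - 1) * Rpower (1 - u (clamp t)) q.
Definition G (c : R) (u : R -> R) (s : R) : R := c * RInt (F u) 0 s.
Definition Q (c : R) (u : R -> R) (s : R) : R := G c u s / s ^ (n - k).
Definition phi (c : R) (u : R -> R) (s : R) : R :=
  if Rle_dec s 0 then 0 else Rpower (Q c u s) (/ INR k).
Definition T (c : R) (u : R -> R) (r : R) : R := - RInt (phi c u) r 1.

Lemma continuity_pt_Rpower_1_sub u t : nonpos_cont u ->
  continuity_pt (fun t => Rpower (1 - u (clamp t)) q) t.
Proof.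
  intros Hu. apply (continuity_pt_comp (fun t => 1 - u (clamp t)) (fun z => Rpower z q)).
  - apply (continuity_pt_minus (fun _ => 1) (fun t => u (clamp t))); [|apply Hu].
    apply continuity_pt_const. intros a b; reflexivity.
  - apply continuity_pt_Rpower_base. pose proof (proj2 Hu _ (clamp_Icc t)). lra.
Qed.

Lemma F_cont u t : nonpos_cont u -> continuity_pt (F u) t.
Proof.
  intros Hu. apply (continuity_pt_mult (fun t => t ^ (n - 1))).
  - apply derivable_continuous_pt, derivable_pt_pow.
  - apply continuity_pt_Rpower_1_sub; auto.
Qed.

Lemma F_pos u t : 0 < t -> 0 < F u t.
Proof. intros Ht. apply Rmult_lt_0_compat; [apply pow_lt; auto|apply Rpower_pos]. Qed.

Lemma F_antitone u v t : nonpos_cont v -> (forall x, Icc x -> u x <= v x) -> 0 <= t ->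
  F v t <= F u t.
Proof.
  intros Hv Huv Ht. apply Rmult_le_compat_l; [apply pow_le; auto|].
  apply Rle_Rpower_l; auto. pose proof (proj2 Hv _ (clamp_Icc t)).
  pose proof (Huv _ (clamp_Icc t)). lra.
Qed.

Lemma ex_RInt_F u a b : nonpos_cont u -> ex_RInt (F u) a b.
Proof.
  intros Hu. apply (ex_RInt_continuous (V:=R_CompleteNormedModule)).
  intros z _. apply continuous_of_continuity_pt, F_cont; auto.
Qed.

Lemma G_deriv c u s : nonpos_cont u -> derivable_pt_lim (G c u) s (c * F u s).
Proof.
  intros Hu. apply (derivable_pt_lim_scal (fun s => RInt (F u) 0 s)).
  apply is_derive_Reals, (is_derive_RInt (F u) (RInt (F u) 0) 0 s).
  - apply filter_forall. intros b. apply (RInt_correct (V:=R_CompleteNormedModule)).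
    apply ex_RInt_F; auto.
  - apply continuous_of_continuity_pt, F_cont; auto.
Qed.

Lemma G_cont c u s : nonpos_cont u -> continuity_pt (G c u) s.
Proof. intros Hu. eapply derivable_pt_lim_continuity_pt, G_deriv, Hu. Qed.

Lemma G_0 c u : G c u 0 = 0.
Proof. unfold G. rewrite RInt_point. unfold zero; simpl. ring. Qed.

Lemma G_pos c u s : 0 < c -> nonpos_cont u -> 0 < s -> 0 < G c u s.
Proof.
  intros Hc Hu Hs. apply Rmult_lt_0_compat; auto.
  apply RInt_gt_0; auto.
  - intros x Hx. apply F_pos. lra.
  - intros x _. apply continuous_of_continuity_pt, F_cont; auto.
Qed.

Lemma G_antitone c c' u v s : 0 < c' <= c -> nonpos_cont u -> nonpos_cont v ->
  (forall x, Icc x -> u x <= v x) -> 0 <= s -> G c' v s <= G c u s.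
Proof.
  intros Hc Hu Hv Huv Hs. unfold G.
  assert (RInt (F v) 0 s <= RInt (F u) 0 s).
  { apply RInt_le; auto; try apply ex_RInt_F; auto.
    intros x Hx. apply F_antitone; auto. lra. }
  assert (0 <= RInt (F v) 0 s).
  { apply RInt_ge_0; auto; [apply ex_RInt_F; auto|].
    intros x Hx. left; apply F_pos. lra. }
  nra.
Qed.

Lemma G_le_pow c u : 0 <= c -> nonpos_cont u ->
  exists M, 0 < M /\ forall s, 0 < s <= 1 -> G c u s <= M * s ^ n.
Proof.
  intros Hc Hu.
  destruct (continuity_ab_maj (fun t => Rpower (1 - u (clamp t)) q) 0 1) as [tm [HM _]].
  { lra. }
  { intros t _. apply continuity_pt_Rpower_1_sub; auto. }
  set (P := Rpower (1 - u (clamp tm)) q) in *.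
  assert (HP : 0 < P) by apply Rpower_pos.
  exists (c * P + 1). split; [nra|].
  intros s Hs.
  assert (HI : Rabs (RInt (F u) 0 s) <= (s - 0) * (s ^ (n - 1) * P)).
  { apply abs_RInt_le_const; [lra|apply ex_RInt_F; auto|].
    intros t Ht. unfold F. rewrite Rabs_mult, Rabs_pos_eq by (apply pow_le; lra).
    rewrite Rabs_pos_eq by (left; apply Rpower_pos).
    apply Rmult_le_compat; [apply pow_le; lra|left; apply Rpower_pos| |apply HM; lra].
    apply pow_incr; lra. }
  assert (Hsn : s ^ n = s * s ^ (n - 1)).
  { replace n with (S (n - 1)) at 1 by lia. reflexivity. }
  pose proof (Rle_abs (RInt (F u) 0 s)). pose proof (pow_le s n ltac:(lra)).
  unfold G. rewrite Hsn in *.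
  apply Rle_trans with (c * (s * (s ^ (n - 1) * P))); [apply Rmult_le_compat_l; lra|].
  nra.
Qed.

Lemma Q_pos c u s : 0 < c -> nonpos_cont u -> 0 < s -> 0 < Q c u s.
Proof. intros. apply Rdiv_lt_0_compat; [apply G_pos|apply pow_lt]; auto. Qed.

Lemma Q_cont c u s : nonpos_cont u -> 0 < s -> continuity_pt (Q c u) s.
Proof.
  intros Hu Hs. apply (continuity_pt_div (G c u) (fun s => s ^ (n - k))).
  - apply G_cont; auto.
  - apply derivable_continuous_pt, derivable_pt_pow.
  - apply pow_nonzero; lra.
Qed.

Lemma Q_le_linear c u : 0 <= c -> nonpos_cont u ->
  exists M, 0 < M /\ forall s, 0 < s <= 1 -> Q c u s <= M * s.
Proof.
  intros Hc Hu. destruct (G_le_pow c u Hc Hu) as [M [HM HG]].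
  exists M. split; auto. intros s Hs.
  assert (Hnk : s ^ n = s ^ (n - k) * s ^ k).
  { rewrite <- pow_add. f_equal. lia. }
  assert (Hsk : s ^ k <= s).
  { replace k with (S (k - 1)) by lia. simpl.
    pose proof (pow_incr s 1 (k - 1) ltac:(lra)). rewrite pow1 in *. nra. }
  pose proof (pow_lt s (n - k) ltac:(lra)).
  unfold Q. apply Rle_trans with (M * s ^ k); [|apply Rmult_le_compat_l; lra].
  apply Rmult_le_reg_r with (s ^ (n - k)); auto.
  unfold Rdiv. rewrite Rmult_assoc, Rinv_l, Rmult_1_r by lra.
  specialize (HG s Hs). rewrite Hnk in HG. nra.
Qed.

Lemma phi_0 c u : phi c u 0 = 0.
Proof. unfold phi. destruct Rle_dec; lra. Qed.

Lemma phi_eq c u s : 0 < s -> phi c u s = Rpower (Q c u s) (/ INR k).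
Proof. intros Hs. unfold phi. destruct Rle_dec; [lra|reflexivity]. Qed.

Lemma phi_nonneg c u s : 0 <= phi c u s.
Proof. unfold phi. destruct Rle_dec; [lra|left; apply Rpower_pos]. Qed.

Lemma phi_pos c u s : 0 < s -> 0 < phi c u s.
Proof. intros. rewrite phi_eq; auto. apply Rpower_pos. Qed.

Lemma phi_pow_mul c u s : 0 < c -> nonpos_cont u -> 0 < s ->
  phi c u s ^ k * s ^ (n - k) = G c u s.
Proof.
  intros Hc Hu Hs. rewrite phi_eq, Rpower_inv_INR_pow by (auto; apply Q_pos; auto).
  unfold Q. field. apply pow_nonzero; lra.
Qed.

Lemma phi_cont c u s : 0 < c -> nonpos_cont u -> continuity_pt (phi c u) s.
Proof.
  intros Hc Hu. destruct (Rtotal_order s 0) as [Hs|[->|Hs]].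
  - apply continuity_pt_local with (fun _ => 0) (- s); [lra| |].
    + intros y Hy. unfold phi. destruct Rle_dec; auto. exfalso.
      revert Hy n0. unfold Rabs; destruct Rcase_abs; lra.
    + apply continuity_pt_const. intros a b; reflexivity.
  - apply continuity_pt_eps. intros eps He.
    destruct (Q_le_linear c u (Rlt_le _ _ Hc) Hu) as [M [HM HQ]].
    assert (Hek : 0 < eps ^ k) by (apply pow_lt; auto).
    exists (Rmin 1 (eps ^ k / M)). split.
    { apply Rmin_pos; [lra|apply Rdiv_lt_0_compat; auto]. }
    intros y Hy. rewrite phi_0, Rminus_0_r. rewrite Rminus_0_r in Hy.
    destruct (Rle_lt_dec y 0) as [Hy0|Hy0].
    { unfold phi. destruct Rle_dec; [|lra]. rewrite Rabs_R0; auto. }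
    pose proof (Rle_abs y).
    assert (y < 1) by (apply Rlt_le_trans with (Rmin 1 (eps ^ k / M)); [lra|apply Rmin_l]).
    assert (y * M < eps ^ k).
    { apply Rlt_le_trans with (eps ^ k / M * M); [|right; field; lra].
      apply Rmult_lt_compat_r; auto.
      apply Rlt_le_trans with (Rmin 1 (eps ^ k / M)); [lra|apply Rmin_r]. }
    rewrite Rabs_pos_eq by apply phi_nonneg. rewrite phi_eq by auto.
    apply Rpower_inv_INR_lt; auto. split; [apply Q_pos; auto|].
    specialize (HQ y ltac:(lra)). lra.
  - apply continuity_pt_local with (fun s => Rpower (Q c u s) (/ INR k)) s; auto.
    + intros y Hy. apply phi_eq. apply (Rabs_lt_self_pos s); auto.
    + apply (continuity_pt_comp (Q c u) (fun z => Rpower z (/ INR k))).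
      * apply Q_cont; auto.
      * apply continuity_pt_Rpower_base, Q_pos; auto.
Qed.

Lemma phi_antitone c c' u v s : 0 < c' <= c -> nonpos_cont u -> nonpos_cont v ->
  (forall x, Icc x -> u x <= v x) -> 0 <= s -> phi c' v s <= phi c u s.
Proof.
  intros Hc Hu Hv Huv Hs. destruct (Req_dec s 0) as [->|Hs0]; [rewrite !phi_0; lra|].
  rewrite !phi_eq by lra. apply Rle_Rpower_l.
  { left; apply Rinv_0_lt_compat, lt_0_INR; lia. }
  split; [apply Q_pos; auto; lra|]. unfold Q, Rdiv. apply Rmult_le_compat_r.
  - left; apply Rinv_0_lt_compat, pow_lt; lra.
  - apply G_antitone; auto.
Qed.

Lemma ex_RInt_phi c u a b : 0 < c -> nonpos_cont u -> ex_RInt (phi c u) a b.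
Proof.
  intros Hc Hu. apply (ex_RInt_continuous (V:=R_CompleteNormedModule)).
  intros z _. apply continuous_of_continuity_pt, phi_cont; auto.
Qed.

Lemma T_deriv c u r : 0 < c -> nonpos_cont u -> derivable_pt_lim (T c u) r (phi c u r).
Proof.
  intros Hc Hu. rewrite <- (Ropp_involutive (phi c u r)).
  apply (derivable_pt_lim_opp (fun r => RInt (phi c u) r 1)).
  apply is_derive_Reals, (is_derive_RInt' (phi c u) (fun r => RInt (phi c u) r 1) r 1).
  - apply filter_forall. intros b. apply (RInt_correct (V:=R_CompleteNormedModule)).
    apply ex_RInt_phi; auto.
  - apply continuous_of_continuity_pt, phi_cont; auto.
Qed.

Lemma T_1 c u : T c u 1 = 0.
Proof. unfold T. rewrite RInt_point. unfold zero; simpl. ring. Qed.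

Lemma T_neg c u r : 0 < c -> nonpos_cont u -> 0 <= r < 1 -> T c u r < 0.
Proof.
  intros Hc Hu Hr. unfold T. cut (0 < RInt (phi c u) r 1); [lra|].
  apply RInt_gt_0; [lra| |].
  - intros x Hx. apply phi_pos. lra.
  - intros x _. apply continuous_of_continuity_pt, phi_cont; auto.
Qed.

Lemma T_nonpos_cont c u : 0 < c -> nonpos_cont u -> nonpos_cont (T c u).
Proof.
  intros Hc Hu. split.
  - intros x. apply continuity_pt_clamp_comp.
    eapply derivable_pt_lim_continuity_pt, T_deriv; auto.
  - intros x [Hx0 Hx1]. destruct (Req_dec x 1) as [->|Hx]; [rewrite T_1; lra|].
    left. apply T_neg; auto. lra.
Qed.

Lemma T_monotone c c' u v r : 0 < c' <= c -> nonpos_cont u -> nonpos_cont v ->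
  (forall x, Icc x -> u x <= v x) -> Icc r -> T c u r <= T c' v r.
Proof.
  intros Hc Hu Hv Huv [Hr0 Hr1]. apply Ropp_le_contravar.
  apply RInt_le; auto; try apply ex_RInt_phi; auto; try lra.
  intros x Hx. apply phi_antitone; auto. lra.
Qed.

Lemma T_lipschitz c u L x y : 0 < c -> nonpos_cont u ->
  (forall s, Icc s -> phi c u s <= L) -> Icc x -> Icc y ->
  Rabs (T c u x - T c u y) <= L * Rabs (x - y).
Proof.
  intros Hc Hu HL Hx Hy. destruct (MVT_abs (T c u) (phi c u) y x) as [z [Hz Hzr]].
  { intros; apply T_deriv; auto. }
  rewrite Hz. apply Rmult_le_compat_r; [apply Rabs_pos|].
  rewrite Rabs_pos_eq by apply phi_nonneg. apply HL.
  unfold Icc in *. pose proof (Rmin_glb y x 0 ltac:(lra) ltac:(lra)).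
  pose proof (Rmax_lub y x 1 ltac:(lra) ltac:(lra)). lra.
Qed.

Section Subsolution.
Variables (lam : R) (v v1 : R -> R).
Hypothesis hlam : 0 < lam.
Hypothesis hv : forall r, Icc r -> deriv_within Icc v r (v1 r) /\ cont_within Icc v1 r.
Hypothesis hadm : admissible n k v1.
Hypothesis hv1 : v 1 <= 0.
Hypothesis hsub : forall r, Ioo r -> exists d,
  derivable_pt_lim (fun s => s ^ (n - k) * v1 s ^ k) r d /\
  cnk n k * d / r ^ (n - 1) >= lam * Rpower (1 - v r) q.

Let c := lam / cnk n k.

Lemma sub_cont x : continuity_pt (fun t => v (clamp t)) x.
Proof.
  apply continuity_pt_clamp_of_cont_within. intros y Hy.
  eapply cont_within_of_deriv_within, (hv y Hy).
Qed.

Lemma sub_deriv_cont x : continuity_pt (fun t => v1 (clamp t)) x.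
Proof. apply continuity_pt_clamp_of_cont_within. intros y Hy. apply (hv y Hy). Qed.

Lemma sub_deriv x : Ioo x -> derivable_pt_lim v x (v1 x).
Proof.
  intros Hx. apply derivable_pt_lim_of_deriv_within; auto.
  apply hv. unfold Ioo, Icc in *; lra.
Qed.

(* Admissibility for i = 1 says that r^{n-1} v' is nondecreasing; it vanishes at 0. *)
Lemma sub_deriv_nonneg r : 0 < r <= 1 -> 0 <= v1 r.
Proof.
  intros Hr.
  assert (Hcont : forall x, continuity_pt (fun t => clamp t ^ (n - 1) * v1 (clamp t)) x).
  { intros x. apply (continuity_pt_mult (fun t => clamp t ^ (n - 1))).
    - apply continuity_pt_clamp_pow.
    - apply sub_deriv_cont. }
  assert (H : 0 ^ (n - 1) * v1 0 <= r ^ (n - 1) * v1 r).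
  { apply (nondecreasing_of_deriv_nonneg (fun s => s ^ (n - 1) * v1 s)); try lra; auto.
    intros x Hx. destruct (hadm 1%nat ltac:(lia) x ltac:(unfold Ioo; lra)) as [d [Hd1 Hd2]].
    exists d. split; auto.
    apply derivable_pt_lim_local with (fun s => s ^ (n - 1) * v1 s ^ 1) 1; [lra| |auto].
    intros y _. rewrite pow_1. reflexivity. }
  rewrite pow_i, Rmult_0_l in H by lia.
  pose proof (pow_lt r (n - 1) ltac:(lra)). nra.
Qed.

Lemma sub_nonpos_cont : nonpos_cont v.
Proof.
  split; [apply sub_cont|].
  intros r [Hr0 Hr1]. destruct (Req_dec r 1) as [->|Hr]; auto.
  apply Rle_trans with (v 1); auto.
  apply nondecreasing_of_deriv_nonneg; try lra; try apply sub_cont.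
  intros x Hx. exists (v1 x). split.
  - apply sub_deriv. unfold Ioo; lra.
  - apply sub_deriv_nonneg. lra.
Qed.

Lemma sub_G_le r : 0 < r <= 1 -> G c v r <= r ^ (n - k) * v1 r ^ k.
Proof.
  intros Hr. pose proof (cnk_pos n k ltac:(lia)) as Hcnk.
  set (D := fun s => s ^ (n - k) * v1 s ^ k - G c v s).
  assert (HDc : forall x, continuity_pt (fun t => D (clamp t)) x).
  { intros x. unfold D.
    apply (continuity_pt_minus (fun t => clamp t ^ (n - k) * v1 (clamp t) ^ k)).
    - apply (continuity_pt_mult (fun t => clamp t ^ (n - k))); [apply continuity_pt_clamp_pow|].
      apply (continuity_pt_comp (fun t => v1 (clamp t)) (fun z => z ^ k)).
      + apply sub_deriv_cont.
      + apply derivable_continuous_pt, derivable_pt_pow.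
    - apply continuity_pt_clamp_comp, G_cont, sub_nonpos_cont. }
  assert (HD : D 0 <= D r).
  { apply nondecreasing_of_deriv_nonneg; try lra; auto.
    intros x Hx. destruct (hsub x ltac:(unfold Ioo; lra)) as [d [Hd1 Hd2]].
    exists (d - c * F v x). split.
    - apply (derivable_pt_lim_minus (fun s => s ^ (n - k) * v1 s ^ k)); auto.
      apply G_deriv, sub_nonpos_cont.
    - unfold F. rewrite clamp_id by (unfold Icc; lra).
      pose proof (pow_lt x (n - 1) ltac:(lra)).
      apply Rge_le in Hd2. unfold c.
      replace (lam / cnk n k * (x ^ (n - 1) * Rpower (1 - v x) q))
        with (lam * Rpower (1 - v x) q * (x ^ (n - 1) / cnk n k)) by (field; lra).
      replace d with (cnk n k * d / x ^ (n - 1) * (x ^ (n - 1) / cnk n k)) at 1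
        by (field; lra).
      cut (lam * Rpower (1 - v x) q * (x ^ (n - 1) / cnk n k)
             <= cnk n k * d / x ^ (n - 1) * (x ^ (n - 1) / cnk n k)); [lra|].
      apply Rmult_le_compat_r; auto. left. apply Rdiv_lt_0_compat; auto. }
  unfold D in HD. rewrite G_0, pow_i in HD by lia. lra.
Qed.

Lemma sub_phi_le r : 0 < r <= 1 -> phi c v r <= v1 r.
Proof.
  intros Hr. pose proof (cnk_pos n k ltac:(lia)).
  apply (pow_le_reg_l (v1 r) (phi c v r) k hk);
    [apply sub_deriv_nonneg; auto|apply phi_nonneg|].
  apply Rmult_le_reg_r with (r ^ (n - k)); [apply pow_lt; lra|].
  rewrite phi_pow_mul; try lra.
  - rewrite Rmult_comm. apply sub_G_le; auto.
  - apply Rdiv_lt_0_compat; auto.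
  - apply sub_nonpos_cont.
Qed.

Lemma sub_le_T r : Icc r -> v r <= T c v r.
Proof.
  intros [Hr0 Hr1]. destruct (Req_dec r 1) as [->|Hr]; [rewrite T_1; auto|].
  pose proof (cnk_pos n k ltac:(lia)).
  assert (Hc : 0 < c) by (apply Rdiv_lt_0_compat; auto).
  pose proof sub_nonpos_cont as Hv.
  assert (Hcont : forall x, continuity_pt (fun t => v (clamp t) - T c v (clamp t)) x).
  { intros x. apply (continuity_pt_minus (fun t => v (clamp t))); [apply sub_cont|].
    apply continuity_pt_clamp_comp. eapply derivable_pt_lim_continuity_pt, T_deriv; auto. }
  assert (v r - T c v r <= v 1 - T c v 1).
  { apply (nondecreasing_of_deriv_nonneg (fun s => v s - T c v s)); try lra; auto.
    intros x Hx. exists (v1 x - phi c v x). split.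
    - apply (derivable_pt_lim_minus v (T c v)); [apply sub_deriv; unfold Ioo; lra|].
      apply T_deriv; auto.
    - pose proof (sub_phi_le x ltac:(lra)). lra. }
  rewrite T_1 in H0. lra.
Qed.

End Subsolution.

Lemma subsolution_le_T lam v : 0 < lam -> is_subsolution n k q lam v ->
  nonpos_cont v /\ forall r, Icc r -> v r <= T (lam / cnk n k) v r.
Proof.
  intros Hlam [v1 [[Hv _] [Hadm [Hv1 Hsub]]]]. split.
  - eapply sub_nonpos_cont; eauto.
  - eapply sub_le_T; eauto.
Qed.

Definition dQ (c : R) (u : R -> R) (s : R) : R :=
  (c * F u s * s ^ (n - k) - INR (n - k) * s ^ pred (n - k) * G c u s) / (s ^ (n - k))².
Definition dphi (c : R) (u : R -> R) (s : R) : R :=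
  / INR k * Rpower (Q c u s) (/ INR k - 1) * dQ c u s.

Lemma Q_deriv c u s : nonpos_cont u -> 0 < s -> derivable_pt_lim (Q c u) s (dQ c u s).
Proof.
  intros Hu Hs. apply (derivable_pt_lim_div (G c u) (fun s => s ^ (n - k))).
  - apply G_deriv; auto.
  - apply derivable_pt_lim_pow.
  - apply pow_nonzero; lra.
Qed.

Lemma phi_deriv c u s : 0 < c -> nonpos_cont u -> 0 < s ->
  derivable_pt_lim (phi c u) s (dphi c u s).
Proof.
  intros Hc Hu Hs.
  apply derivable_pt_lim_local with (fun s => Rpower (Q c u s) (/ INR k)) s; auto.
  - intros y Hy. apply phi_eq. apply (Rabs_lt_self_pos s); auto.
  - apply (derivable_pt_lim_comp (Q c u) (fun z => Rpower z (/ INR k))).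
    + apply Q_deriv; auto.
    + apply derivable_pt_lim_power, Q_pos; auto.
Qed.

Lemma dphi_cont c u s : 0 < c -> nonpos_cont u -> 0 < s -> continuity_pt (dphi c u) s.
Proof.
  intros Hc Hu Hs. assert (Hpow : forall m, continuity_pt (fun s => s ^ m) s)
    by (intros; apply derivable_continuous_pt, derivable_pt_pow).
  apply (continuity_pt_mult (fun s => / INR k * Rpower (Q c u s) (/ INR k - 1))).
  - apply (continuity_pt_scal (fun s => Rpower (Q c u s) (/ INR k - 1))).
    apply (continuity_pt_comp (Q c u) (fun z => Rpower z (/ INR k - 1))).
    + apply Q_cont; auto.
    + apply continuity_pt_Rpower_base, Q_pos; auto.
  - apply continuity_pt_div.
    + apply continuity_pt_minus.
      * apply continuity_pt_mult; [apply continuity_pt_scal, F_cont; auto|apply Hpow].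
      * apply continuity_pt_mult; [apply continuity_pt_scal, Hpow|apply G_cont; auto].
    + apply continuity_pt_mult; apply Hpow.
    + unfold Rsqr. apply Rmult_integral_contrapositive. split; apply pow_nonzero; lra.
Qed.

(* Since phi^k = G / s^(n-k), the i-th admissibility quantity s^(n-i) phi^i equals
   G^(i/k) s^e with an exponent e >= 0 (as i <= k < n), which is nondecreasing. *)
Lemma pow_mul_phi_pow_eq c u i s : 0 < c -> nonpos_cont u -> 0 < s ->
  s ^ (n - i) * phi c u s ^ i =
  Rpower (G c u s) (INR i / INR k) * Rpower s (INR (n - i) - INR i / INR k * INR (n - k)).
Proof.
  intros Hc Hu Hs. rewrite phi_eq by auto.
  assert (HG : 0 < G c u s) by (apply G_pos; auto).
  assert (Hk : INR k <> 0) by (apply not_0_INR; lia).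
  unfold Rpower. rewrite <- !Rpower_pow by (auto; apply exp_pos).
  unfold Rpower. rewrite ln_exp, <- !exp_plus. f_equal.
  unfold Q, Rdiv at 1. rewrite ln_mult, ln_Rinv, ln_pow; auto.
  - field; auto.
  - apply pow_lt; auto.
  - apply Rinv_0_lt_compat, pow_lt; auto.
Qed.

Lemma phi_admissible c u : 0 < c -> nonpos_cont u -> admissible n k (phi c u).
Proof.
  intros Hc Hu i Hi r Hr. pose proof Hr as [Hr0 Hr1].
  set (a := INR i / INR k).
  set (e := INR (n - i) - a * INR (n - k)).
  assert (Hk : 0 < INR k) by (apply lt_0_INR; lia).
  assert (Ha : 0 <= a) by (apply Rdiv_le_0_compat; auto; apply pos_INR).
  assert (He : 0 <= e).
  { unfold e, a. rewrite !minus_INR by lia.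
    assert (INR i <= INR k) by (apply le_INR; lia). pose proof (pos_INR n).
    replace (INR n - INR i - INR i / INR k * (INR n - INR k))
      with (INR n * (INR k - INR i) / INR k) by (field; lra).
    apply Rdiv_le_0_compat; auto. apply Rmult_le_pos; lra. }
  assert (HG : 0 < G c u r) by (apply G_pos; auto).
  exists (a * Rpower (G c u r) (a - 1) * (c * F u r) * Rpower r e
          + Rpower (G c u r) a * (e * Rpower r (e - 1))).
  split.
  - apply derivable_pt_lim_local with (fun s => Rpower (G c u s) a * Rpower s e) r; [lra| |].
    { intros y Hy. apply pow_mul_phi_pow_eq; auto. apply (Rabs_lt_self_pos r); auto. }
    apply (derivable_pt_lim_mult (fun s => Rpower (G c u s) a) (fun s => Rpower s e)).
    + apply (derivable_pt_lim_comp (G c u) (fun z => Rpower z a)).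
      * apply G_deriv; auto.
      * apply derivable_pt_lim_power; auto.
    + apply derivable_pt_lim_power. lra.
  - pose proof (F_pos u r Hr0).
    pose proof (Rpower_pos (G c u r) (a - 1)). pose proof (Rpower_pos (G c u r) a).
    pose proof (Rpower_pos r e). pose proof (Rpower_pos r (e - 1)).
    apply Rplus_le_le_0_compat.
    + apply Rmult_le_pos; [|lra]. apply Rmult_le_pos; [apply Rmult_le_pos|nra]; lra.
    + apply Rmult_le_pos; [lra|]. apply Rmult_le_pos; lra.
Qed.

Lemma T_solution_of_fixed lam U : 0 < lam -> nonpos_cont U ->
  (forall x, Icc x -> U x = T (lam / cnk n k) U x) ->
  is_solution n k q lam (T (lam / cnk n k) U).
Proof.
  intros Hlam HU Hfix. pose proof (cnk_pos n k ltac:(lia)) as Hcnk.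
  set (c := lam / cnk n k) in *.
  assert (Hc : 0 < c) by (apply Rdiv_lt_0_compat; auto).
  exists (phi c U). repeat split.
  - apply deriv_within_of_derivable_pt_lim, T_deriv; auto.
  - apply cont_within_of_continuity_pt, phi_cont; auto.
  - exists (dphi c U). intros r [Hr _]. split.
    + apply phi_deriv; auto.
    + apply dphi_cont; auto.
  - apply phi_admissible; auto.
  - apply phi_0.
  - apply T_1.
  - intros r [Hr0 Hr1]. apply T_neg; auto. lra.
  - intros r [Hr0 Hr1]. exists (c * F U r). split.
    + apply derivable_pt_lim_local with (G c U) r; auto.
      * intros y Hy. rewrite <- phi_pow_mul; auto; [ring|]. apply (Rabs_lt_self_pos r); auto.
      * apply G_deriv; auto.
    + unfold F. rewrite clamp_id, <- Hfix by (unfold Icc; lra).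
      unfold c. field. split; [lra|apply pow_nonzero; lra].
Qed.

Section MaximalFixedPoint.
Variables (c : R) (w : R -> R).
Hypothesis hc : 0 < c.
Hypothesis hw : nonpos_cont w.
Hypothesis hwT : forall x, Icc x -> w x <= T c w x.

Definition T_sub_above (u : R -> R) : Prop :=
  nonpos_cont u /\ (forall x, Icc x -> w x <= u x) /\ (forall x, Icc x -> u x <= T c u x).

Lemma T_sub_above_w : T_sub_above w.
Proof. split; [exact hw|split; auto]. intros; lra. Qed.

Lemma T_sub_above_T u : T_sub_above u -> T_sub_above (T c u).
Proof.
  intros [Hu [Hwu HuT]]. repeat split.
  - apply T_nonpos_cont; auto.
  - apply T_nonpos_cont; auto.
  - intros x Hx. apply Rle_trans with (T c w x); auto. apply T_monotone; auto; lra.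
  - intros x Hx. apply T_monotone; auto; [lra|apply T_nonpos_cont; auto].
Qed.

Lemma T_sub_above_Rmax u v : T_sub_above u -> nonpos_cont v ->
  (forall x, Icc x -> v x <= T c v x) -> T_sub_above (fun x => Rmax (v x) (u x)).
Proof.
  intros [Hu [Hwu HuT]] Hv HvT.
  assert (Hm : nonpos_cont (fun x => Rmax (v x) (u x))).
  { split.
    - intros x. apply (continuity_pt_Rmax (fun t => v (clamp t)) (fun t => u (clamp t)));
        [apply Hv|apply Hu].
    - intros x Hx. apply Rmax_lub; [apply Hv|apply Hu]; auto. }
  repeat split; try apply Hm.
  - intros x Hx. apply Rle_trans with (u x); [auto|apply Rmax_r].
  - intros x Hx. apply Rmax_lub.
    + apply Rle_trans with (T c v x); auto. apply T_monotone; auto; [lra|].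
      intros; apply Rmax_l.
    + apply Rle_trans with (T c u x); auto. apply T_monotone; auto; [lra|].
      intros; apply Rmax_r.
Qed.

Definition sub_values (x : R) (y : R) : Prop :=
  y = w (clamp x) \/ exists u, T_sub_above u /\ y = u (clamp x).

Lemma sub_values_bound x : bound (sub_values x).
Proof.
  exists (Rmax 0 (w (clamp x))). intros y [->|[u [[[_ Hu] _] ->]]]; [apply Rmax_r|].
  apply Rle_trans with 0; [apply Hu, clamp_Icc|apply Rmax_l].
Qed.

Lemma sub_values_inhabited x : exists y, sub_values x y.
Proof. exists (w (clamp x)). left. reflexivity. Qed.

Definition Umax (x : R) : R :=
  proj1_sig (completeness (sub_values x) (sub_values_bound x) (sub_values_inhabited x)).

Lemma Umax_lub x : is_lub (sub_values x) (Umax x).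
Proof. unfold Umax. apply proj2_sig. Qed.

Lemma Umax_ub u x : T_sub_above u -> Icc x -> u x <= Umax x.
Proof.
  intros Hu Hx. apply (Umax_lub x). right. exists u. rewrite clamp_id; auto.
Qed.

Lemma Umax_least x M : Icc x -> (forall u, T_sub_above u -> u x <= M) -> Umax x <= M.
Proof.
  intros Hx HM. apply (Umax_lub x). intros y [->|[u [Hu ->]]]; rewrite clamp_id; auto.
  apply HM, T_sub_above_w.
Qed.

(* Since u >= w, phi c u <= phi c w, which is bounded on [0,1]. *)
Lemma phi_le_uniform : exists L, 0 <= L /\
  forall u s, T_sub_above u -> Icc s -> phi c u s <= L.
Proof.
  destruct (continuity_ab_maj (phi c w) 0 1) as [sm [Hsm _]];
    [lra|intros t _; apply phi_cont; auto|].
  exists (phi c w sm). split; [apply phi_nonneg|].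
  intros u s [Hu [Hwu _]] [Hs0 Hs1]. apply Rle_trans with (phi c w s); [|apply Hsm; lra].
  apply phi_antitone; auto. lra.
Qed.

Lemma Umax_lipschitz : exists L, 0 <= L /\
  forall x y, Icc x -> Icc y -> Rabs (Umax x - Umax y) <= L * Rabs (x - y).
Proof.
  destruct phi_le_uniform as [L [HL0 HL]]. exists L. split; auto.
  assert (Hle : forall x y, Icc x -> Icc y -> Umax x <= Umax y + L * Rabs (x - y)).
  { intros x y Hx Hy. apply Umax_least; auto. intros u Hu.
    pose proof Hu as [Hnp [_ HuT]].
    assert (Rabs (T c u x - T c u y) <= L * Rabs (x - y)) by (apply T_lipschitz; auto).
    pose proof (Umax_ub (T c u) y (T_sub_above_T u Hu) Hy).
    pose proof (Rle_abs (T c u x - T c u y)). pose proof (HuT x Hx). lra. }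
  intros x y Hx Hy. pose proof (Hle x y Hx Hy). pose proof (Hle y x Hy Hx).
  rewrite Rabs_minus_sym in H0. unfold Rabs at 1. destruct Rcase_abs; lra.
Qed.

Lemma Umax_nonpos_cont : nonpos_cont Umax.
Proof.
  split.
  - destruct Umax_lipschitz as [L [HL0 HL]]. intros x. apply continuity_pt_eps.
    intros eps He. exists (eps / (L + 1)). split; [apply Rdiv_lt_0_compat; lra|].
    intros y Hy.
    apply Rle_lt_trans with (L * Rabs (y - x)).
    { eapply Rle_trans; [apply HL; apply clamp_Icc|].
      apply Rmult_le_compat_l; auto. apply clamp_lipschitz. }
    apply Rle_lt_trans with ((L + 1) * Rabs (y - x)); [pose proof (Rabs_pos (y - x)); nra|].
    apply Rlt_le_trans with ((L + 1) * (eps / (L + 1))); [apply Rmult_lt_compat_l; lra|].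
    right. field. lra.
  - intros x Hx. apply Umax_least; auto. intros u [[_ Hu] _]. auto.
Qed.

Lemma T_sub_above_Umax : T_sub_above Umax.
Proof.
  repeat split; try apply Umax_nonpos_cont.
  - intros x Hx. apply Umax_ub; auto. apply T_sub_above_w.
  - intros x Hx. apply Umax_least; auto. intros u Hu. pose proof Hu as [Hnp [Hwu HuT]].
    apply Rle_trans with (T c u x); auto.
    apply T_monotone; auto; [lra|apply Umax_nonpos_cont|].
    intros; apply Umax_ub; auto.
Qed.

Lemma Umax_fixed x : Icc x -> Umax x = T c Umax x.
Proof.
  intros Hx. apply Rle_antisym.
  - apply T_sub_above_Umax; auto.
  - apply Umax_ub; auto. apply T_sub_above_T, T_sub_above_Umax.
Qed.

Lemma Umax_greatest v : nonpos_cont v -> (forall x, Icc x -> v x <= T c v x) ->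
  forall r, Icc r -> v r <= Umax r.
Proof.
  intros Hv HvT r Hr. apply Rle_trans with (Rmax (v r) (Umax r)); [apply Rmax_l|].
  apply (Umax_ub (fun x => Rmax (v x) (Umax x))); auto.
  apply T_sub_above_Rmax; auto. apply T_sub_above_Umax.
Qed.

Lemma bounded01_T_Umax : bounded01 (T c Umax).
Proof.
  destruct Umax_lipschitz as [L [HL0 HL]]. exists L. intros r Hr.
  assert (H1 : Icc 1) by (unfold Icc; lra).
  rewrite <- Umax_fixed by auto.
  replace (Umax r) with (Umax r - Umax 1) by (rewrite (Umax_fixed 1 H1), T_1; ring).
  eapply Rle_trans; [apply HL; auto|]. destruct Hr.
  rewrite Rabs_left1 by lra. nra.
Qed.

End MaximalFixedPoint.

Theorem maximal_solution_exists lam0 lam w : 0 < lam < lam0 -> is_solution n k q lam0 w ->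
  exists u, is_maximal n k q lam u /\ bounded01 u.
Proof.
  intros Hlam Hw. pose proof (cnk_pos n k ltac:(lia)) as Hcnk.
  set (c := lam / cnk n k).
  assert (Hc : 0 < c) by (apply Rdiv_lt_0_compat; lra).
  destruct (subsolution_le_T lam0 w ltac:(lra)) as [Hw0 HwT0].
  { apply (is_subsolution_of_solution n k q lam0 lam0); auto. lra. }
  assert (HwT : forall x, Icc x -> w x <= T c w x).
  { intros x Hx. apply Rle_trans with (T (lam0 / cnk n k) w x); auto.
    apply T_monotone; auto; [|intros; lra].
    split; auto. apply Rmult_le_compat_r; [left; apply Rinv_0_lt_compat|]; lra. }
  exists (T c (Umax c w)). split; [split|].
  - apply T_solution_of_fixed; [lra|apply Umax_nonpos_cont; auto|].
    apply Umax_fixed; auto.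
  - intros v Hv r Hr. destruct (subsolution_le_T lam v ltac:(lra) Hv) as [Hv0 HvT].
    rewrite <- Umax_fixed by auto. apply Umax_greatest; auto.
  - apply bounded01_T_Umax; auto.
Qed.

End IntegralOperator.

Theorem lemma2 (n k : nat) (q lam0 : R) :
  (1 <= k)%nat -> (2 * k < n)%nat -> INR k < q -> 0 < lam0 ->
  (exists w, is_solution n k q lam0 w) ->
  (forall lam, 0 < lam < lam0 ->
     exists u, is_maximal n k q lam u /\ bounded01 u) /\
  (forall l1 l2 (u1 u2 : R -> R), 0 < l1 -> l1 < l2 -> l2 < lam0 ->
     is_maximal n k q l1 u1 -> is_maximal n k q l2 u2 ->
     forall r, Icc r -> u2 r <= u1 r).
Proof.
  intros hk hn hq Hlam0 [w Hw]. split.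
  - intros lam Hlam. apply (maximal_solution_exists n k q hk ltac:(lia)) with lam0 w; auto.
    pose proof (pos_INR k). lra.
  - intros l1 l2 u1 u2 H1 H12 H2 [_ Hmax1] [Hsol2 _] r Hr.
    apply Hmax1; auto. apply is_subsolution_of_solution with l2; auto. lra.
Qed.
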